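(* Let $\chi$ be an indecomposable character on $S(2^\infty)$ with GNS triple $(\pi,\mathcal{H},\xi)$. Let $A\subset X$ be nice and $s\in S(2^\infty)$ with $A\subset Fix(s)$. Then $\pi(s)P^A=P^A$.
   Context: Let $X=\{0,1\}^{\mathbb{N}}$; $X_n=\{0,1\}^n$; $S(2^n)$ the group of all bijections of $X_n$, acting on $X$ by $s((x,a))=(s(x),a)$; $S(2^\infty)=\bigcup_n S(2^n)$; $Fix(s)=\{x\in X:s(x)=x\}$. A character on a group $G$ is a function $\chi$ with $\chi(g_1g_2)=\chi(g_2g_1)$, $(\chi(g_ig_j^{-1}))_{i,j}$ positive semidefinite for all finite families, and $\chi(e)=1$; indecomposable means not a nontrivial convex combination of two distinct characters. GNS triple: $\pi$ a unitary representation on $\mathcal{H}$, $\xi$ a unit cyclic vector, $\chi(g)=(\pi(g)\xi,\xi)$. A set $A\subset X$ is nice if $A=C\times X$ for some $k$ and $C\subset X_k$ (sequences whose first $k$ coordinates lie in $C$). For such $A$ and $m>k$, $s^A_m$ fixes $A$ pointwise and flips the $m$-th coordinate of points outside $A$; $P^A$ is the weak operator limit of $\pi(s^A_m)$ as $m\to\infty$. *)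

From HB Require Import structures.
From mathcomp Require Import all_boot all_order all_algebra all_fingroup.
From mathcomp Require Import reals.
From mathcomp Require Import complex.
Set Implicit Arguments. Unset Strict Implicit. Unset Printing Implicit Defensive.
Import Order.TTheory GRing.Theory Num.Theory.
Local Open Scope ring_scope.

Definition X := nat -> bool.

Definition pre (n : nat) (x : X) : n.-tuple bool := [tuple x (nat_of_ord i) | i < n].

(* action of s in S(2^n) on X: s((y,a)) = (s(y), a) *)
Definition act (n : nat) (s : {perm n.-tuple bool}) : X -> X :=
  fun x i => if (i < n)%N then nth false (s (pre n x)) i else x i.

(* membership in S(2^oo) = union of the S(2^n), viewed as maps X -> X;
   group product is composition, identity is id *)
Definition inS (f : X -> X) : Prop :=
  exists n (s : {perm n.-tuple bool}), f = act s.

Section Defs.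
Variable R : realType.

Definition is_character (chi : (X -> X) -> R[i]) : Prop :=
  [/\ (forall f g, inS f -> inS g -> chi (f \o g) = chi (g \o f)),
      (forall (K : nat) (n : 'I_K -> nat) (s : forall i, {perm (n i).-tuple bool})
              (c : 'I_K -> R[i]),
          0 <= \sum_(i < K) \sum_(j < K)
                 c i * (c j)^* * chi (act (s i) \o act (s j)^-1))
    & chi id = 1].

Definition eqS (chi1 chi2 : (X -> X) -> R[i]) : Prop :=
  forall f, inS f -> chi1 f = chi2 f.

Definition indecomposable (chi : (X -> X) -> R[i]) : Prop :=
  ~ exists (chi1 chi2 : (X -> X) -> R[i]) (t : R[i]),
      [/\ 0 < t < 1, is_character chi1, is_character chi2, ~ eqS chi1 chi2
        & eqS chi (fun g => t * chi1 g + (1 - t) * chi2 g)].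

Section Hilbert.
Variable V : lmodType R[i].
Variable ip : V -> V -> R[i].

Definition hnorm (x : V) : R[i] := sqrtC (ip x x).

Definition is_inner_product : Prop :=
  [/\ (forall a x y z, ip (a *: x + y) z = a * ip x z + ip y z),
      (forall x y, ip y x = (ip x y)^*),
      (forall x, 0 <= ip x x)
    & (forall x, ip x x = 0 -> x = 0)].

Definition is_complete : Prop :=
  forall u : nat -> V,
    (forall e : R[i], 0 < e -> exists N, forall m n, (N <= m)%N -> (N <= n)%N ->
        hnorm (u m - u n) < e) ->
    exists l, forall e : R[i], 0 < e -> exists N, forall n, (N <= n)%N ->
        hnorm (u n - l) < e.

Definition is_hilbert : Prop := is_inner_product /\ is_complete.

Definition unitary_rep (pi : (X -> X) -> V -> V) : Prop :=
  [/\ (forall g, inS g -> forall (a : R[i]) x y, pi g (a *: x + y) = a *: pi g x + pi g y),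
      (forall g, inS g -> forall x y, ip (pi g x) (pi g y) = ip x y),
      (forall g, inS g -> forall y, exists x, pi g x = y),
      (forall g h, inS g -> inS h -> pi (g \o h) =1 pi g \o pi h)
    & pi id =1 id].

Definition cyclic_vector (pi : (X -> X) -> V -> V) (xi : V) : Prop :=
  forall (eta : V) (e : R[i]), 0 < e ->
    exists (K : nat) (g : 'I_K -> X -> X) (c : 'I_K -> R[i]),
      (forall i, inS (g i)) /\ hnorm (eta - \sum_(i < K) c i *: pi (g i) xi) < e.

Definition GNS_triple (chi : (X -> X) -> R[i]) (pi : (X -> X) -> V -> V) (xi : V) : Prop :=
  [/\ unitary_rep pi, ip xi xi = 1, cyclic_vector pi xi
    & forall g, inS g -> chi g = ip (pi g xi) xi].

Definition cvgC (u : nat -> R[i]) (l : R[i]) : Prop :=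
  forall e : R[i], 0 < e -> exists N, forall m, (N <= m)%N -> `|u m - l| < e.

Definition wot_limit (T : nat -> V -> V) (P : V -> V) : Prop :=
  forall eta zeta, cvgC (fun m => ip (T m eta) zeta) (ip (P eta) zeta).

End Hilbert.
End Defs.

(* The nice set A = C x X (C a subset of X_k) and s^A_m: fixes A pointwise and
   flips the m-th coordinate (index m.-1, coordinates numbered from 1) outside A.
   Only relevant for m > k. *)
Definition flip (j : nat) (x : X) : X := fun i => if i == j then ~~ x i else x i.

Definition sA (k : nat) (C : {set k.-tuple bool}) (m : nat) : X -> X :=
  fun x => if pre k x \in C then x else flip m.-1 x.

From Pilot Require Import Defs.
From mathcomp Require Import all_boot all_order all_algebra all_fingroup.
From mathcomp Require Import reals complex ring zify.
From Stdlib Require Import FunctionalExtensionality.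
Import Order.TTheory GRing.Theory Num.Theory.
Set Implicit Arguments. Unset Strict Implicit. Unset Printing Implicit Defensive.
Local Notation act := Defs.act.

(* Let [t] be an involution in [S(2^oo)] that moves only the first [n]
   coordinates and fixes [A] pointwise, and let [a <> b] exceed [n] and [k].
   Conjugating [s^A_a s^A_b] by the involution "apply [t] when coordinate [b]
   is 1" gives [s^A_a t s^A_b], so [chi] takes the same value on both; through
   the GNS triple, [<pi(s^A_b) v, pi(t) pi(s^A_a) v> = <pi(s^A_b) v, pi(s^A_a) v>]
   for every [v = pi(g) xi]. Letting [b], then [a], go to infinity yields
   [<P v, pi(t) P v> = <P v, P v>], hence [pi(t) P v = P v] because [pi(t)] is
   unitary. As [P] is linear, of norm at most 1, and the vectors [pi(g) xi]
   span a dense subspace, [pi(t) P = P]. Finally a permutation fixing [A]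
   pointwise is a product of transpositions fixing [A] pointwise. *)

Lemma nth_pre n x i : (i < n)%N -> nth false (pre n x) i = x i.
Proof. by move=> lt_in; have -> : i = Ordinal lt_in by []; rewrite nth_mktuple. Qed.

Lemma eq_pre n x y : (forall i, (i < n)%N -> x i = y i) -> pre n x = pre n y.
Proof. by move=> eq_xy; apply: eq_from_tnth => j; rewrite !tnth_mktuple eq_xy. Qed.

Lemma eq_tuple_nth n (t1 t2 : n.-tuple bool) :
  (forall i, (i < n)%N -> nth false t1 i = nth false t2 i) -> t1 = t2.
Proof. by move=> eq12; apply: eq_from_tnth => j; rewrite !(tnth_nth false) eq12. Qed.

Lemma act_lt n (s : {perm n.-tuple bool}) x i :
  (i < n)%N -> act s x i = nth false (s (pre n x)) i.
Proof. by rewrite /act => ->. Qed.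

Lemma act_ge n (s : {perm n.-tuple bool}) x i : (n <= i)%N -> act s x i = x i.
Proof. by rewrite /act ltnNge => ->. Qed.

Lemma pre_act n (s : {perm n.-tuple bool}) x : pre n (act s x) = s (pre n x).
Proof. by apply: eq_tuple_nth => i lt_in; rewrite nth_pre // act_lt. Qed.

Lemma act_fixed n (s : {perm n.-tuple bool}) x : s (pre n x) = pre n x -> act s x = x.
Proof.
move=> sx; apply: functional_extensionality => i.
by case: (ltnP i n) => [lt_in|le_ni]; [rewrite act_lt // sx nth_pre | rewrite act_ge].
Qed.

Lemma actM n (p q : {perm n.-tuple bool}) : act (p * q) = act q \o act p.
Proof.
apply: functional_extensionality => x; apply: functional_extensionality => i /=.
by case: (ltnP i n) => [lt_in|le_ni]; [rewrite !act_lt // pre_act permM | rewrite !act_ge].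
Qed.

Lemma act1 n : act (1 : {perm n.-tuple bool}) = id.
Proof. by apply: functional_extensionality => x; apply: act_fixed; rewrite perm1. Qed.

Definition acts_on_prefix (L : nat) (f : X -> X) : Prop :=
  [/\ injective f, (forall x i, (L <= i)%N -> f x i = x i) &
      (forall x y, (forall i, (i < L)%N -> x i = y i) ->
         forall i, (i < L)%N -> f x i = f y i)].

Lemma act_on_prefix n (s : {perm n.-tuple bool}) : acts_on_prefix n (act s).
Proof.
split=> [x y eq_sxy | x i /act_ge // | x y eq_xy i lt_in]; last first.
  by rewrite !act_lt // (eq_pre eq_xy).
apply: functional_extensionality => i.
case: (ltnP i n) => [lt_in|le_ni]; last first.
  by have := congr1 (fun f => f i) eq_sxy; rewrite !act_ge.
have /perm_inj eq_pre_xy : s (pre n x) = s (pre n y) by rewrite -!pre_act eq_sxy.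
by rewrite -(nth_pre x lt_in) -(nth_pre y lt_in) eq_pre_xy.
Qed.

Lemma inS_of_prefix L f : acts_on_prefix L f -> inS f.
Proof.
case=> f_inj f_tail f_prefix.
pose ext (y : L.-tuple bool) : X := nth false y.
pose F (y : L.-tuple bool) : L.-tuple bool := [tuple f (ext y) i | i < L].
have nth_F y i : (i < L)%N -> nth false (F y) i = f (ext y) i.
  by move=> lt_iL; have -> : i = Ordinal lt_iL by []; rewrite nth_mktuple.
have F_inj : injective F.
  move=> y1 y2 eq_F; apply: eq_tuple_nth => i lt_iL.
  suff /f_inj eq_ext : f (ext y1) = f (ext y2) by rewrite -/(ext y1 i) eq_ext.
  apply: functional_extensionality => j; case: (ltnP j L) => [lt_jL|le_Lj].
    by rewrite -!nth_F // eq_F.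
  by rewrite !f_tail // /ext !nth_default ?size_tuple.
exists L, (perm F_inj); apply: functional_extensionality => x.
apply: functional_extensionality => i; case: (ltnP i L) => [lt_iL|le_Li].
  by rewrite act_lt // permE nth_F //; apply: f_prefix => // j lt_jL; rewrite /ext nth_pre.
by rewrite act_ge // f_tail.
Qed.

Lemma prefix_of_inS f : inS f -> exists L, acts_on_prefix L f.
Proof. by case=> n [s ->]; exists n; apply: act_on_prefix. Qed.

Lemma acts_on_prefixW L L' f : (L <= L')%N -> acts_on_prefix L f -> acts_on_prefix L' f.
Proof.
move=> le_LL' [f_inj f_tail f_prefix]; split=> // [x i le_L'i|x y eq_xy i lt_iL'].
  by apply: f_tail; apply: leq_trans le_L'i.
case: (ltnP i L) => [lt_iL|le_Li]; last by rewrite !f_tail // eq_xy.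
by apply: f_prefix => // j lt_jL; apply: eq_xy; apply: leq_trans le_LL'.
Qed.

Lemma acts_on_prefix_comp L f g :
  acts_on_prefix L f -> acts_on_prefix L g -> acts_on_prefix L (f \o g).
Proof.
move=> [f_inj f_tail f_prefix] [g_inj g_tail g_prefix]; split.
- exact: inj_comp.
- by move=> x i le_Li /=; rewrite f_tail // g_tail.
- by move=> x y eq_xy i lt_iL /=; apply: f_prefix => // j lt_jL; apply: g_prefix.
Qed.

Lemma inS_comp f g : inS f -> inS g -> inS (f \o g).
Proof.
move=> /prefix_of_inS[L1 f_L1] /prefix_of_inS[L2 g_L2].
apply: (@inS_of_prefix (maxn L1 L2)).
by apply: acts_on_prefix_comp; [apply: acts_on_prefixW f_L1 | apply: acts_on_prefixW g_L2];
  rewrite ?leq_maxl ?leq_maxr.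
Qed.

Lemma inS_inv f : inS f -> exists2 f', inS f' & cancel f f' /\ cancel f' f.
Proof.
case=> n [s ->]; exists (act s^-1%g); first by exists n, s^-1%g.
by split=> x; rewrite -[act _ (act _ x)]/((_ \o _) x) -actM ?mulgV ?mulVg act1.
Qed.

Lemma perm_ind_tperm (T : finType) (Q : {perm T} -> Prop) :
  Q 1%g -> (forall (s : {perm T}) x, s x != x -> Q (s * tperm x (s x))%g -> Q s) ->
  forall s, Q s.
Proof.
move=> Q1 Qstep s; have [m] := ubnP #|[set y | s y != y]|.
elim: m s => // m IHm s /ltnSE le_moved_m.
have [x /= sx_x|s_id] := pickP (fun x => s x != x); last first.
  by have -> : s = 1%g by apply/permP => y; rewrite perm1; apply/eqP/negPn; rewrite s_id.
apply: (Qstep _ _ sx_x); apply: IHm; apply: leq_trans le_moved_m.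
apply: proper_card; apply/properP; split; last first.
  by exists x; rewrite !inE // permM tpermR eqxx.
apply/subsetP => y; rewrite !inE permM; apply: contraNN => /eqP sy_y.
rewrite sy_y tpermD //.
  by apply: contraNneq sx_x => ->; rewrite sy_y.
by apply: contraNneq sx_x => eq_sxy; rewrite eq_sxy (perm_inj (etrans eq_sxy (esym sy_y))).
Qed.

Section NiceSet.
Variables (k : nat) (C : {set k.-tuple bool}).

Definition inA x := pre k x \in C.

Lemma pre_flip j x : (k <= j)%N -> pre k (flip j x) = pre k x.
Proof.
by move=> le_kj; apply: eq_pre => i lt_ik; rewrite /flip; case: eqP => // ?; lia.
Qed.

Lemma flipK j : involutive (flip j).
Proof.
by move=> x; apply: functional_extensionality => i; rewrite /flip; case: eqP; rewrite ?negbK.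
Qed.

Lemma sA_in m x : inA x -> sA C m x = x.
Proof. by rewrite /sA /inA => ->. Qed.

Lemma sA_notin m x : ~~ inA x -> sA C m x = flip m.-1 x.
Proof. by rewrite /sA /inA => /negbTE ->. Qed.

Lemma inA_sA m x : (k < m)%N -> inA (sA C m x) = inA x.
Proof. by move=> lt_km; rewrite /sA; case: ifP => // _; rewrite /inA pre_flip //; lia. Qed.

Lemma sAK m : (k < m)%N -> involutive (sA C m).
Proof.
move=> lt_km x; have [xA|xNA] := boolP (inA x); first by rewrite !sA_in.
by rewrite [sA C m x]sA_notin // sA_notin ?flipK // -(sA_notin m xNA) inA_sA.
Qed.

Lemma sA_on_prefix m : (k < m)%N -> acts_on_prefix m (sA C m).
Proof.
move=> lt_km; split.
- exact: can_inj (sAK lt_km).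
- move=> x i le_mi; rewrite /sA /flip; case: ifP => // _.
  by case: eqP => // ?; lia.
- move=> x y eq_xy i lt_im.
  rewrite /sA /flip; have -> : pre k x = pre k y.
    by apply: eq_pre => j lt_jk; apply: eq_xy; lia.
  by case: ifP => _; rewrite eq_xy.
Qed.

Lemma sA_inS m : (k < m)%N -> inS (sA C m).
Proof. by move/sA_on_prefix/inS_of_prefix. Qed.

Section InvolutionFixingA.
Variables (n : nat) (t : X -> X).
Hypotheses (t_prefix : acts_on_prefix n t) (tK : involutive t)
  (t_fixA : forall x, inA x -> t x = x).

Lemma t_tail x i : (n <= i)%N -> t x i = x i.
Proof. by case: t_prefix => _ t_tail _; apply: t_tail. Qed.

Lemma inA_t x : inA (t x) = inA x.
Proof.
have [xA|xNA] := boolP (inA x); first by rewrite t_fixA.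
by apply: contraNF xNA => txA; rewrite -(tK x) t_fixA.
Qed.

Lemma t_flip j x : (n <= j)%N -> t (flip j x) = flip j (t x).
Proof.
case: t_prefix => _ _ t_pref le_nj; apply: functional_extensionality => i.
rewrite {2}/flip; case: eqP => [->|ne_ij]; first by rewrite !t_tail // /flip eqxx.
case: (ltnP i n) => [lt_in|le_ni]; last by rewrite !t_tail // /flip; case: eqP.
by apply: t_pref => // l lt_ln; rewrite /flip; case: eqP => // ?; lia.
Qed.

Definition cond_t b x := if x b.-1 then t x else x.

Lemma cond_tK b : (n < b)%N -> involutive (cond_t b).
Proof.
move=> lt_nb x; rewrite /cond_t; case xb: (x b.-1); last by rewrite xb.
by rewrite t_tail ?xb ?tK //; lia.
Qed.

Lemma cond_t_on_prefix b : (n < b)%N -> acts_on_prefix b (cond_t b).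
Proof.
move=> lt_nb; split.
- exact: can_inj (cond_tK lt_nb).
- by move=> x i le_bi; rewrite /cond_t; case: ifP => // _; apply: t_tail; lia.
- move=> x y eq_xy i lt_ib; rewrite /cond_t eq_xy; last by lia.
  case: ifP => _; last exact: eq_xy.
  case: (ltnP i n) => [lt_in|le_ni]; last by rewrite !t_tail // eq_xy.
  by case: t_prefix => _ _ t_pref; apply: t_pref => // j lt_jn; apply: eq_xy; lia.
Qed.

Lemma cond_t_sA a b x : (n < a)%N -> (k < a)%N -> (n < b)%N -> a != b ->
  cond_t b (sA C a x) = sA C a (cond_t b x).
Proof.
move=> lt_na lt_ka lt_nb ne_ab; rewrite /cond_t.
have [xA|xNA] := boolP (inA x).
  by rewrite sA_in //; case: ifP => _; rewrite ?t_fixA // sA_in.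
have -> : sA C a x b.-1 = x b.-1.
  by rewrite sA_notin // /flip; case: eqP => // ?; lia.
case: ifP => _; last by [].
by rewrite !sA_notin ?inA_t // t_flip //; lia.
Qed.

Lemma cond_t_sAJ b x : (n < b)%N -> (k < b)%N ->
  cond_t b (sA C b (cond_t b x)) = t (sA C b x).
Proof.
move=> lt_nb lt_kb; have [xA|xNA] := boolP (inA x).
  have tx : cond_t b x = x by rewrite /cond_t; case: ifP => // _; apply: t_fixA.
  by rewrite tx !sA_in // tx t_fixA.
rewrite /cond_t (sA_notin _ xNA); case xb: (x b.-1).
  rewrite sA_notin ?inA_t // {1}/flip eqxx t_tail ?xb /=; last by lia.
  by rewrite t_flip //; lia.
by rewrite sA_notin // {1}/flip eqxx xb.
Qed.

End InvolutionFixingA.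
End NiceSet.

Local Open Scope ring_scope.

Section LinearFromAxiom.
Variables (K : pzRingType) (U W : lmodType K) (f : U -> W).
Hypothesis f_lin : forall a x y, f (a *: x + y) = a *: f x + f y.

Lemma linear0_of : f 0 = 0.
Proof.
have := f_lin 1 0 0; rewrite !scale1r addr0 => f00.
by apply: (addIr (f 0)); rewrite add0r -f00.
Qed.

Lemma linearD_of x y : f (x + y) = f x + f y.
Proof. by rewrite -{1}(scale1r x) f_lin scale1r. Qed.

Lemma linearZ_of a x : f (a *: x) = a *: f x.
Proof. by rewrite -(addr0 (a *: x)) f_lin linear0_of addr0. Qed.

End LinearFromAxiom.

Section InnerProduct.
Variables (R : realType) (V : lmodType R[i]) (ip : V -> V -> R[i]).
Hypothesis ip_inner : is_inner_product ip.
Local Notation hn := (hnorm ip).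

Lemma ipDZl a x y z : ip (a *: x + y) z = a * ip x z + ip y z.
Proof. by case: ip_inner => H _ _ _; apply: H. Qed.

Lemma ipC x y : ip y x = (ip x y)^*.
Proof. by case: ip_inner => _ H _ _; apply: H. Qed.

Lemma ip_ge0 x : 0 <= ip x x.
Proof. by case: ip_inner => _ _ H _; apply: H. Qed.

Lemma ip_eq0 x : ip x x = 0 -> x = 0.
Proof. by case: ip_inner => _ _ _ H; apply: H. Qed.

Lemma ipDZl_regular z a x y :
  (ip^~ z : V -> R[i]^o) (a *: x + y) = a *: ip x z + ip y z.
Proof. exact: ipDZl. Qed.

Lemma ip0l z : ip 0 z = 0.
Proof. exact: linear0_of (ipDZl_regular z). Qed.

Lemma ipZl a x z : ip (a *: x) z = a * ip x z.
Proof. exact: (linearZ_of (ipDZl_regular z) a x). Qed.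

Lemma ipDl x y z : ip (x + y) z = ip x z + ip y z.
Proof. exact: (linearD_of (ipDZl_regular z) x y). Qed.

Lemma ipBl x y z : ip (x - y) z = ip x z - ip y z.
Proof. by rewrite ipDl -scaleN1r ipZl mulN1r. Qed.

Lemma ipZr z a x : ip z (a *: x) = a^* * ip z x.
Proof. by rewrite ipC ipZl rmorphM /= -ipC. Qed.

Lemma ipBr z x y : ip z (x - y) = ip z x - ip z y.
Proof. by rewrite ipC ipBl rmorphB /= -!ipC. Qed.

Lemma ip0r z : ip z 0 = 0.
Proof. by rewrite ipC ip0l rmorph0. Qed.

Lemma hnorm_ge0 x : 0 <= hn x.
Proof. by rewrite sqrtC_ge0 ip_ge0. Qed.

Lemma hnorm_sqr x : hn x ^+ 2 = ip x x.
Proof. exact: sqrtCK. Qed.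

Lemma hnorm_eq0 x : hn x = 0 -> x = 0.
Proof. by move=> x0; apply: ip_eq0; rewrite -hnorm_sqr x0 expr0n. Qed.

Lemma ip_cauchy_schwarz x y : `|ip x y| <= hn x * hn y.
Proof.
have [->|y0] := eqVneq y 0; first by rewrite ip0r normr0 mulr_ge0 // hnorm_ge0.
have yy_gt0 : 0 < ip y y.
  by rewrite lt_def ip_ge0 andbT; apply: contraNneq y0 => /ip_eq0 ->.
have yy_real : (ip y y)^* = ip y y by apply/CrealP/ger0_real; apply: ip_ge0.
set l := ip x y / ip y y.
have : 0 <= ip (x - l *: y) (x - l *: y) by apply: ip_ge0.
have -> : ip (x - l *: y) (x - l *: y) = ip x x - ip x y * (ip x y)^* / ip y y.
  rewrite ipBl !ipBr !ipZl !ipZr (ipC x y) /l rmorphM /= fmorphV /= yy_real.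
  by field; rewrite gt_eqF.
rewrite subr_ge0 ler_pdivrMr // => le_xy.
rewrite -(ler_pXn2r (n := 2)) ?nnegrE ?mulr_ge0 ?hnorm_ge0 //.
by rewrite normCK exprMn !hnorm_sqr.
Qed.

Lemma hnorm_le_dual x (M : R[i]) : 0 <= M ->
  (forall z, `|ip x z| <= M * hn z) -> hn x <= M.
Proof.
move=> M_ge0 le_xM; have [x0|xn0] := eqVneq (hn x) 0; first by rewrite x0.
have x_gt0 : 0 < hn x by rewrite lt_def xn0 hnorm_ge0.
rewrite -(ler_pM2r x_gt0) -expr2 hnorm_sqr -(ger0_norm (ip_ge0 x)).
exact: le_xM.
Qed.

Lemma eq_ip x y : (forall z, ip x z = ip y z) -> x = y.
Proof. by move=> eq_xy; apply/eqP; rewrite -subr_eq0; apply/eqP/ip_eq0; rewrite ipBl eq_xy subrr. Qed.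

Lemma ip_eq_self x y :
  ip y y = ip x x -> ip x y = ip x x -> ip y x = ip x x -> y = x.
Proof.
move=> eq_yy eq_xy eq_yx; apply/eqP; rewrite -subr_eq0; apply/eqP/ip_eq0.
by rewrite ipBl !ipBr eq_yy eq_xy eq_yx !subrr.
Qed.

End InnerProduct.

Section ComplexLimits.
Variable R : realType.
Implicit Types (u w : nat -> R[i]) (l : R[i]).

Lemma cvgC_eq u w l : (exists N, forall m, (N <= m)%N -> u m = w m) -> cvgC u l -> cvgC w l.
Proof.
move=> [N eq_uw] ul e e_gt0; have [N1 le_ul] := ul e e_gt0.
by exists (maxn N N1) => m; rewrite geq_max => /andP[le_Nm le_N1m]; rewrite -eq_uw ?le_ul.
Qed.

Lemma cvgC_unique u l1 l2 : cvgC u l1 -> cvgC u l2 -> l1 = l2.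
Proof.
move=> ul1 ul2; apply/eqP; rewrite -subr_eq0 -normr_eq0 eq_le normr_ge0 andbT.
apply/ler_addgt0Pr => e e_gt0; rewrite add0r.
have e2_gt0 : 0 < e / 2 by rewrite divr_gt0 ?ltr0n.
have [N1 le_ul1] := ul1 _ e2_gt0; have [N2 le_ul2] := ul2 _ e2_gt0.
set m := maxn N1 N2; rewrite (splitr e); apply/ltW.
apply: le_lt_trans (ler_distD (u m) _ _) _; rewrite distrC.
by apply: ltrD; [apply: le_ul1; rewrite leq_maxl | apply: le_ul2; rewrite leq_maxr].
Qed.

Lemma cvgCD u w l1 l2 : cvgC u l1 -> cvgC w l2 -> cvgC (fun m => u m + w m) (l1 + l2).
Proof.
move=> ul1 wl2 e e_gt0.
have e2_gt0 : 0 < e / 2 by rewrite divr_gt0 ?ltr0n.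
have [N1 le_ul1] := ul1 _ e2_gt0; have [N2 le_wl2] := wl2 _ e2_gt0.
exists (maxn N1 N2) => m; rewrite geq_max => /andP[le_N1m le_N2m].
rewrite opprD addrACA (splitr e); apply: le_lt_trans (ler_normD _ _) _.
exact: ltrD (le_ul1 _ _) (le_wl2 _ _).
Qed.

Lemma cvgC_norm_le u l M : M \is Num.real ->
  (exists N, forall m, (N <= m)%N -> `|u m| <= M) -> cvgC u l -> `|l| <= M.
Proof.
move=> M_real [N le_uM] ul; apply/ler_addgt0Pr => e e_gt0.
have [N1 le_ul] := ul e e_gt0; set m := maxn N N1.
rewrite -(subrK (u m) l) addrC; apply: le_trans (ler_normD _ _) _.
by apply: lerD; [apply: le_uM; rewrite leq_maxl | rewrite distrC ltW ?le_ul ?leq_maxr].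
Qed.

End ComplexLimits.

Section GNSRepresentation.
Variables (R : realType) (V : lmodType R[i]) (ip : V -> V -> R[i])
  (chi : (X -> X) -> R[i]) (pi : (X -> X) -> V -> V) (xi : V).
Hypotheses (ip_inner : is_inner_product ip) (chi_char : is_character chi)
  (gns : GNS_triple ip chi pi xi).
Local Notation hn := (hnorm ip).

Lemma pi_linear g : inS g -> forall a x y, pi g (a *: x + y) = a *: pi g x + pi g y.
Proof. by case: gns => -[H _ _ _ _] _ _ _ /H. Qed.

Lemma pi_isometry g x y : inS g -> ip (pi g x) (pi g y) = ip x y.
Proof. by case: gns => -[_ H _ _ _] _ _ _ /H. Qed.

Lemma piM g h x : inS g -> inS h -> pi (g \o h) x = pi g (pi h x).
Proof. by case: gns => -[_ _ _ H _] _ _ _ gS hS; apply: H. Qed.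

Lemma pi_id x : pi id x = x.
Proof. by case: gns => -[_ _ _ _ H] _ _ _; apply: H. Qed.

Lemma chi_ip g : inS g -> chi g = ip (pi g xi) xi.
Proof. by case: gns => _ _ _ H /H. Qed.

Lemma chiC f g : inS f -> inS g -> chi (f \o g) = chi (g \o f).
Proof. by case: chi_char => H _ _; apply: H. Qed.

Lemma chiJ g g' h : inS g -> inS g' -> inS h -> cancel g' g -> chi (g' \o h \o g) = chi h.
Proof.
move=> gS g'S hS g'K; rewrite -compA chiC //; last exact: inS_comp.
by congr chi; apply: functional_extensionality => x /=; rewrite g'K.
Qed.

Lemma pi_involutive t : inS t -> involutive t -> involutive (pi t).
Proof. by move=> tS tK x; rewrite -piM // (functional_extensionality _ _ tK : t \o t = id) pi_id. Qed.

Lemma ip_pi_sym t x y : inS t -> involutive t -> ip (pi t x) y = ip x (pi t y).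
Proof. by move=> tS tK; rewrite -{1}(pi_involutive tS tK y) pi_isometry. Qed.

Lemma ip_pi_xi g h h' : inS g -> inS h -> inS h' -> cancel h h' ->
  ip (pi g xi) (pi h xi) = chi (h' \o g).
Proof.
move=> gS hS h'S hK; rewrite -(pi_isometry _ _ h'S) -!piM //.
by rewrite (functional_extensionality _ _ hK : h' \o h = id) pi_id -chi_ip //; apply: inS_comp.
Qed.

Lemma ip_pi_conj g h1 h2 h2' : inS g -> inS h1 -> inS h2 -> inS h2' -> cancel h2 h2' ->
  ip (pi h1 (pi g xi)) (pi h2 (pi g xi)) = chi (h2' \o h1).
Proof.
move=> gS h1S h2S h2'S h2K; have [g' g'S [gK g'K]] := inS_inv gS.
rewrite -!piM // (@ip_pi_xi _ _ (g' \o h2')); try exact: inS_comp; last first.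
  by move=> x /=; rewrite h2K gK.
by rewrite -[g' \o h2' \o _]/(g' \o (h2' \o h1) \o g) chiJ //; apply: inS_comp.
Qed.

Section WeakLimit.
Variables (k : nat) (C : {set k.-tuple bool}) (P : V -> V).
Hypothesis P_lim : wot_limit ip (fun m => pi (sA C m)) P.

Lemma P_linear a x y : P (a *: x + y) = a *: P x + P y.
Proof.
apply: (eq_ip ip_inner) => z.
have lim_lin : cvgC (fun m => ip (pi (sA C m) (a *: x + y)) z)
                    (ip (P x) (a^* *: z) + ip (P y) z).
  apply: cvgC_eq (cvgCD (P_lim x (a^* *: z)) (P_lim y z)).
  exists k.+1 => m lt_km.
  by rewrite pi_linear ?(ipDZl ip_inner) ?(ipZr ip_inner) ?conjCK //; apply: sA_inS.
by rewrite (cvgC_unique (P_lim _ z) lim_lin) (ipDZl ip_inner) (ipZr ip_inner) conjCK.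
Qed.

Lemma ip_P_le d z : `|ip (P d) z| <= hn d * hn z.
Proof.
apply: cvgC_norm_le (P_lim d z); first by apply: ger0_real; rewrite mulr_ge0 ?hnorm_ge0.
exists k.+1 => m lt_km; apply: le_trans (ip_cauchy_schwarz ip_inner _ _) _.
by rewrite /hnorm pi_isometry //; apply: sA_inS.
Qed.

Section InvolutionFixingA.
Variables (n : nat) (t : X -> X).
Hypotheses (t_prefix : acts_on_prefix n t) (tK : involutive t)
  (t_fixA : forall x, inA C x -> t x = x).
Let tS : inS t := inS_of_prefix t_prefix.

(* [s^A_a t s^A_b] is the conjugate of [s^A_a s^A_b] by [cond_t t b]. *)
Lemma chi_sA_t_sA a b : (n < a)%N -> (k < a)%N -> (n < b)%N -> (k < b)%N -> a != b ->
  chi (sA C a \o t \o sA C b) = chi (sA C a \o sA C b).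
Proof.
move=> lt_na lt_ka lt_nb lt_kb ne_ab.
have uS := inS_of_prefix (cond_t_on_prefix t_prefix tK lt_nb).
have -> : sA C a \o t \o sA C b = cond_t t b \o (sA C a \o sA C b) \o cond_t t b.
  apply: functional_extensionality => x /=.
  by rewrite (cond_t_sA t_prefix tK t_fixA) // (cond_t_sAJ t_prefix tK t_fixA).
by apply: chiJ => //; [apply: inS_comp; exact: sA_inS | apply: (cond_tK t_prefix tK lt_nb)].
Qed.

Lemma ip_sA_t_sA g a b : inS g ->
  (n < a)%N -> (k < a)%N -> (n < b)%N -> (k < b)%N -> a != b ->
  ip (pi (sA C b) (pi g xi)) (pi t (pi (sA C a) (pi g xi)))
  = ip (pi (sA C b) (pi g xi)) (pi (sA C a) (pi g xi)).
Proof.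
move=> gS lt_na lt_ka lt_nb lt_kb ne_ab.
have aS := sA_inS C lt_ka; have bS := sA_inS C lt_kb.
have taS := inS_comp tS aS; have atS := inS_comp aS tS.
rewrite -(piM _ tS aS) (@ip_pi_conj _ _ _ (sA C a \o t)) //; last first.
  by move=> x /=; rewrite tK sAK.
by rewrite (@ip_pi_conj _ _ _ (sA C a)) //; [exact: chi_sA_t_sA | exact: sAK].
Qed.

Lemma ip_P_t g : inS g ->
  ip (P (pi g xi)) (pi t (P (pi g xi))) = ip (P (pi g xi)) (P (pi g xi)).
Proof.
move=> gS; set v := pi g xi; set x := P v.
have x_t_sA a : (maxn n k < a)%N -> ip x (pi t (pi (sA C a) v)) = ip x (pi (sA C a) v).
  move=> lt_Na; apply: (cvgC_unique (P_lim v _)); apply: cvgC_eq (P_lim v _).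
  by exists a.+1 => b lt_ab; rewrite ip_sA_t_sA //; lia.
have sA_t_x a : (maxn n k < a)%N -> ip (pi (sA C a) v) (pi t x) = ip (pi (sA C a) v) x.
  by move=> lt_Na; rewrite (ipC ip_inner) ip_pi_sym // x_t_sA // -(ipC ip_inner).
apply: (cvgC_unique (P_lim v _)); apply: cvgC_eq (P_lim v _).
by exists (maxn n k).+1 => a lt_Na; rewrite sA_t_x.
Qed.

Lemma P_t_cyclic g : inS g -> pi t (P (pi g xi)) = P (pi g xi).
Proof.
move=> gS; apply: (ip_eq_self ip_inner); rewrite ?pi_isometry ?ip_P_t //.
by rewrite ip_pi_sym // ip_P_t.
Qed.

Lemma P_t_span K (g : 'I_K -> X -> X) c : (forall i, inS (g i)) ->
  pi t (P (\sum_(i < K) c i *: pi (g i) xi)) = P (\sum_(i < K) c i *: pi (g i) xi).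
Proof.
move=> gS; have t_lin := pi_linear tS.
apply: (big_ind (fun v => pi t (P v) = P v)) => [|v w tv tw|i _].
- by rewrite (linear0_of P_linear) (linear0_of t_lin).
- by rewrite (linearD_of P_linear) (linearD_of t_lin) tv tw.
- by rewrite (linearZ_of P_linear) (linearZ_of t_lin) P_t_cyclic.
Qed.

Lemma P_t eta : pi t (P eta) = P eta.
Proof.
pose D v := pi t (P v) - P v.
have D_lin a v w : D (a *: v + w) = a *: D v + D w.
  by rewrite /D P_linear pi_linear // scalerBr addrACA opprD.
have D_le d : hn (D d) <= 2 * hn d.
  apply: (hnorm_le_dual ip_inner); first by rewrite mulr_ge0 ?hnorm_ge0.
  move=> z; rewrite /D (ipBl ip_inner) ip_pi_sym //.
  apply: le_trans (ler_normB _ _) _; rewrite -mulrA mulr_natl mulr2n.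
  apply: lerD; apply: le_trans (ip_P_le _ _) _; by rewrite /hnorm ?pi_isometry.
suff : hn (D eta) <= 0.
  move=> le_D0; apply/eqP; rewrite -subr_eq0; apply/eqP/(hnorm_eq0 ip_inner)/le_anti.
  by rewrite le_D0 hnorm_ge0.
apply/ler_addgt0Pr => e e_gt0; rewrite add0r.
have e2_gt0 : 0 < e / 2 by rewrite divr_gt0 ?ltr0n.
have [K [g [c [gS lt_d]]]] : exists K (g : 'I_K -> X -> X) (c : 'I_K -> R[i]),
    (forall i, inS (g i)) /\ hn (eta - \sum_(i < K) c i *: pi (g i) xi) < e / 2.
  by case: gns => _ _ cyclic _; apply: cyclic.
set S := \sum_(i < K) _ in lt_d.
have DS : D S = 0 by rewrite /D P_t_span // subrr.
have -> : D eta = D (eta - S) + D S by rewrite -(linearD_of D_lin) subrK.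
rewrite DS addr0.
apply: le_trans (D_le _) _.
by rewrite -ler_pdivlMl ?ltr0n // mulrC ltW.
Qed.

End InvolutionFixingA.

Lemma P_act_fixed n (s : {perm n.-tuple bool}) :
  (forall x, inA C x -> act s x = x) -> forall eta, pi (act s) (P eta) = P eta.
Proof.
elim/perm_ind_tperm: s => [_ eta | s y sy_y IH s_fixA eta]; first by rewrite act1 pi_id.
set tau := tperm y (s y).
have pre_fix x : inA C x -> s (pre n x) = pre n x by move/s_fixA => sx; rewrite -pre_act sx.
have tau_fixA x : inA C x -> act tau x = x.
  move=> xA; apply/act_fixed/tpermD; apply: contraNneq sy_y.
    by move=> ->; rewrite pre_fix.
  by move=> /(congr1 s^-1%g); rewrite permK -(pre_fix _ xA) permK => ->; rewrite pre_fix.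
have tauK : involutive (act tau).
  by move=> x; rewrite -[act tau (act tau x)]/((act tau \o act tau) x) -actM tperm2 act1.
have -> : s = (s * tau * tau)%g by rewrite -mulgA tperm2 mulg1.
rewrite actM piM; [|by exists n, tau | by exists n, (s * tau)%g].
rewrite IH ?(P_t (act_on_prefix tau)) // => x xA.
by rewrite actM /= s_fixA // tau_fixA.
Qed.

End WeakLimit.
End GNSRepresentation.

Unset Implicit Arguments.
Theorem mainTheorem6 (R : realType) (V : lmodType R[i]) (ip : V -> V -> R[i])
    (chi : (X -> X) -> R[i]) (pi : (X -> X) -> V -> V) (xi : V)
    (k : nat) (C : {set k.-tuple bool}) (s : X -> X) (P : V -> V) :
  is_hilbert ip ->
  is_character chi -> indecomposable chi ->
  GNS_triple ip chi pi xi ->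
  inS s -> (forall x : X, pre k x \in C -> s x = x) ->
  wot_limit ip (fun m => pi (sA C m)) P ->
  forall eta : V, pi s (P eta) = P eta.
Proof.
move=> [ip_inner _] chi_char _ gns [n [s' ->]] s_fixA P_lim eta.
exact: (P_act_fixed ip_inner chi_char gns P_lim s_fixA).
Qed.
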